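(* Let $G$ be a factor-critical equimatchable graph. Then $G$ is edge-stable if and only if there is no set $R$ of three vertices of $G$ inducing a copy of $\overline{P_3}$ (i.e. $G[R]$ has exactly one edge) such that $G\setminus R$ has a perfect matching.
   Context: All graphs are finite and simple. A graph is equimatchable if all its maximal matchings have the same cardinality; an equimatchable graph $G$ is edge-stable if $G\setminus e$ (delete edge $e$, keep vertices) is equimatchable for every $e\in E(G)$. A graph $G$ is factor-critical if $G-v$ has a perfect matching for every $v\in V(G)$. $\overline{P_3}$ is the complement of the path on three vertices, i.e. one edge plus an isolated vertex. For $R\subseteq V(G)$, $G\setminus R$ is the subgraph induced by $V(G)\setminus R$. *)

From mathcomp Require Import all_boot.
Set Implicit Arguments. Unset Strict Implicit. Unset Printing Implicit Defensive.

(* A finite simple graph is given by a vertex set V : {set T} over a finType T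
   and a symmetric irreflexive adjacency relation e : rel T (only its
   restriction to V matters).  Induced subgraphs G \ R are obtained by
   shrinking the vertex set to V :\: R; edge deletion modifies e. *)

Definition simple_graph (T : finType) (e : rel T) :=
  irreflexive e /\ symmetric e.

Definition is_edge (T : finType) (V : {set T}) (e : rel T) (f : {set T}) :=
  exists x y, [/\ x \in V, y \in V, e x y & f = [set x; y]].

Definition matching (T : finType) (V : {set T}) (e : rel T) (M : {set {set T}}) :=
  (forall f, f \in M -> is_edge V e f) /\
  (forall f g, f \in M -> g \in M -> f != g -> [disjoint f & g]).

Definition maximal_matching (T : finType) (V : {set T}) (e : rel T)
    (M : {set {set T}}) :=
  matching V e M /\ (forall M' : {set {set T}}, M \proper M' -> ~ matching V e M').

Definition equimatchable (T : finType) (V : {set T}) (e : rel T) :=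
  forall M1 M2, maximal_matching V e M1 -> maximal_matching V e M2 ->
    #|M1| = #|M2|.

Definition perfect_matching (T : finType) (V : {set T}) (e : rel T)
    (M : {set {set T}}) :=
  matching V e M /\ cover M = V.

Definition has_perfect_matching (T : finType) (V : {set T}) (e : rel T) :=
  exists M, perfect_matching V e M.

Definition factor_critical (T : finType) (V : {set T}) (e : rel T) :=
  forall v, v \in V -> has_perfect_matching (V :\ v) e.

Definition del_edge (T : finType) (e : rel T) (x y : T) : rel T :=
  fun u v => e u v && ~~ ((u == x) && (v == y) || (u == y) && (v == x)).

Definition edge_stable (T : finType) (V : {set T}) (e : rel T) :=
  equimatchable V e /\
  (forall x y, x \in V -> y \in V -> e x y -> equimatchable V (del_edge e x y)).

Definition induces_coP3 (T : finType) (e : rel T) (R : {set T}) :=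
  exists a b c, [/\ R = [set a; b; c], a != b, b != c, a != c &
    [/\ e a b, ~~ e b c & ~~ e a c]].

From mathcomp Require Import all_boot zify.
Set Implicit Arguments. Unset Strict Implicit.

(* A near-perfect matching of G - a, given by factor-criticality, is maximal in
   G and in every G \ ab, and has (|V| - 1)/2 edges.  If R = {a, b, c} spans
   only the edge ab and G \ R has a perfect matching M, then M is maximal in
   G \ ab with only (|V| - 3)/2 edges, so G \ ab is not equimatchable.
   Conversely, a maximal matching M of G \ xy that is not maximal in G leaves
   x and y uncovered; M + xy is then maximal in G, hence has (|V| - 1)/2 edges
   by equimatchability, so exactly one further vertex z is uncovered, and the
   maximality of M in G \ xy forces {x, y, z} to induce a co-P3 whose
   complement is perfectly matched by M. *)

Lemma card3_set2 (T : finType) (R : {set T}) (u v : T) :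
  #|R| = 3 -> u \in R -> v \in R -> u != v ->
  exists w, [/\ R = [set u; v; w], w != u & w != v].
Proof.
move=> R3 uR vR uv.
have : #|R :\ u :\ v| == 1.
  by move: R3; rewrite (cardsD1 u) uR (cardsD1 v (R :\ u)) !inE eq_sym uv vR; lia.
case/cards1P => w Rw; exists w.
have : w \in R :\ u :\ v by rewrite Rw set11.
rewrite !inE => /and3P [wv wu _]; split=> //.
apply/setP => z; rewrite !inE; have /setP/(_ z) := Rw; rewrite !inE.
by case: eqP => [-> | _]; case: eqP => [-> | _] //= <-; rewrite ?uR ?vR ?orbT.
Qed.

Section Matchings.
Variable T : finType.
Implicit Types (V W R : {set T}) (e : rel T) (M : {set {set T}}) (x y u v : T).

Lemma card_is_edge V e f : irreflexive e -> is_edge V e f -> #|f| = 2.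
Proof.
move=> irr [x [y [_ _ exy ->]]]; rewrite cards2.
by case: eqP exy => // ->; rewrite irr.
Qed.

Lemma card_cover_matching V e M :
  irreflexive e -> matching V e M -> #|cover M| = #|M| * 2.
Proof.
move=> irr [edgeM disjM].
have /eqP <- : trivIset M by apply/trivIsetP => f g; exact: disjM.
by rewrite -sum_nat_const; apply: eq_bigr => f /edgeM /(card_is_edge irr).
Qed.

Lemma card_perfect_matching V e M :
  irreflexive e -> perfect_matching V e M -> #|M| * 2 = #|V|.
Proof. by move=> irr [matchM <-]; rewrite (card_cover_matching irr matchM). Qed.

Lemma cover_matching_sub V e M : matching V e M -> cover M \subset V.
Proof.
move=> [edgeM _]; apply/subsetP => u /bigcupP [f /edgeM [x [y [xV yV _ ->]]]].
by rewrite !inE => /orP [] /eqP ->.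
Qed.

Lemma matching_sub W V e1 e2 M : W \subset V ->
  {in W &, forall u v, e1 u v -> e2 u v} ->
  matching W e1 M -> matching V e2 M.
Proof.
move=> /subsetP WV e12 [edgeM disjM]; split=> // f /edgeM [x [y [xW yW exy ->]]].
by exists x, y; split; rewrite ?WV ?e12.
Qed.

Lemma matching_cover V e M : matching V e M -> matching (cover M) e M.
Proof.
move=> [edgeM disjM]; split=> // f fM.
have [x [y [_ _ exy fxy]]] := edgeM f fM.
by exists x, y; split=> //; apply/bigcupP; exists f; rewrite // fxy !inE eqxx ?orbT.
Qed.

Lemma disjoint_uncovered M x y f : x \notin cover M -> y \notin cover M ->
  f \in M -> [disjoint [set x; y] & f].
Proof.
move=> xM yM fM; rewrite disjoints_subset; apply/subsetP => u.
rewrite !inE => /orP [] /eqP ->; [move: xM | move: yM];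
  by apply: contra => zf; apply/bigcupP; exists f.
Qed.

Lemma edge_notin_matching M x y : x \notin cover M -> [set x; y] \notin M.
Proof.
apply: contra => xyM; apply/bigcupP; exists [set x; y] => //.
by rewrite !inE eqxx.
Qed.

Lemma matching_setU1 V e M x y : matching V e M -> x \in V -> y \in V -> e x y ->
  x \notin cover M -> y \notin cover M -> matching V e ([set x; y] |: M).
Proof.
move=> [edgeM disjM] xV yV exy xM yM; split.
  by move=> f /setU1P [-> | /edgeM //]; exists x, y.
move=> f g /setU1P [-> | fM] /setU1P [-> | gM]; rewrite ?eqxx //.
- by move=> _; apply: disjoint_uncovered xM yM gM.
- by move=> _; rewrite disjoint_sym; apply: disjoint_uncovered xM yM fM.
- exact: disjM.
Qed.

Lemma maximal_matchingP V e M : maximal_matching V e M <->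
  matching V e M /\ {in V &, forall x y, e x y -> (x \in cover M) || (y \in cover M)}.
Proof.
split=> [[matchM maxM] | [matchM coverM]].
  split=> // x y xV yV exy; apply/negPn/negP; rewrite negb_or => /andP [xM yM].
  apply: (maxM _ _ (matching_setU1 matchM xV yV exy xM yM)).
  by apply: properUr; rewrite sub1set (edge_notin_matching _ xM).
split=> // M' /properP [subM [f fM' fM]] [edgeM' disjM'].
have [x [y [xV yV exy fxy]]] := edgeM' f fM'.
have [g gM zg] : exists2 g, g \in M & (x \in g) || (y \in g).
  case/orP: (coverM x y xV yV exy) => /bigcupP [g gM zg];
    by exists g; rewrite ?zg ?orbT.
have fg : f != g by apply: contraNneq fM => ->.
have /disjointFl := disjM' f g fM' (subsetP subM g gM) fg.
by case/orP: zg => zg /(_ _ zg); rewrite fxy !inE eqxx ?orbT.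
Qed.

Lemma perfect_matching_setD_maximal V R e M :
  {in R &, forall u v, ~~ e u v} -> perfect_matching (V :\: R) e M ->
  maximal_matching V e M.
Proof.
move=> freeR [matchM coverM]; apply/maximal_matchingP; split.
  exact: matching_sub (subsetDl V R) _ matchM.
move=> u v uV vV euv; rewrite coverM !inE uV vV !andbT -negb_and.
by apply: contraTN euv => /andP [uR vR]; apply: freeR.
Qed.

End Matchings.

Section DeleteEdge.
Variables (T : finType) (e : rel T) (x y : T).

Lemma del_edge_sub u v : del_edge e x y u v -> e u v.
Proof. by case/andP. Qed.

Lemma irreflexive_del_edge : irreflexive e -> irreflexive (del_edge e x y).
Proof. by move=> irr u; rewrite /del_edge irr. Qed.

Lemma del_edge_deleted u v : e u v -> ~~ del_edge e x y u v ->
  (u == x) && (v == y) || (u == y) && (v == x).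
Proof. by rewrite /del_edge => ->; rewrite negbK. Qed.

Lemma matching_del_edge (W : {set T}) (M : {set {set T}}) :
  x \notin W -> matching W e M -> matching W (del_edge e x y) M.
Proof.
move=> xW; apply: matching_sub (subxx W) _ => u v uW vW euv.
have [ux vx] : u != x /\ v != x by split; apply: contraNneq xW => <-.
by rewrite /del_edge euv (negbTE ux) (negbTE vx) andbF.
Qed.

Lemma maximal_matching_setU1_del_edge (V : {set T}) (M : {set {set T}}) :
  maximal_matching V (del_edge e x y) M -> x \in V -> y \in V -> e x y ->
  x \notin cover M -> y \notin cover M -> maximal_matching V e ([set x; y] |: M).
Proof.
move=> /maximal_matchingP [matchM coverM] xV yV exy xM yM.
have matchMe : matching V e M.
  by apply: matching_sub (subxx V) _ matchM => u v _ _ /del_edge_sub.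
apply/maximal_matchingP; split; first exact: matching_setU1.
move=> u v uV vV euv; rewrite /cover big_setU1 ?edge_notin_matching //= !inE.
case: (boolP (del_edge e x y u v)) => [/(coverM u v uV vV) /orP [] -> | ];
  rewrite ?orbT //.
by move/(del_edge_deleted euv)/orP => [] /andP [/eqP -> _]; rewrite eqxx ?orbT.
Qed.

End DeleteEdge.

Section CoP3.
Variables (T : finType) (e : rel T).
Hypotheses (irr : irreflexive e) (sym : symmetric e).

Lemma coP3_del_edge_free a b c : ~~ e b c -> ~~ e a c ->
  {in [set a; b; c] &, forall u v, ~~ del_edge e a b u v}.
Proof.
move=> nbc nac u v; rewrite !inE -!orbA => /or3P [] /eqP -> /or3P [] /eqP ->;
  rewrite /del_edge ?irr ?(sym c) ?(negbTE nbc) ?(negbTE nac) ?eqxx ?orbT ?andbF //=.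
Qed.

End CoP3.

Section UncoveredCoP3.
Variables (T : finType) (V : {set T}) (e : rel T) (x y : T) (M : {set {set T}}).
Hypotheses (irr : irreflexive e) (maxM : maximal_matching V (del_edge e x y) M).
Hypotheses (xV : x \in V) (yV : y \in V) (exy : e x y).
Hypotheses (xM : x \notin cover M) (yM : y \notin cover M).

Lemma uncovered_coP3 : #|V :\: cover M| = 3 -> induces_coP3 e (V :\: cover M).
Proof.
move=> R3; have /maximal_matchingP [_ coverM] := maxM.
have xy : x != y by apply: contraTneq exy => ->; rewrite irr.
have [|| z [Rxyz zx zy]] := card3_set2 R3 _ _ xy; rewrite ?inE ?xM ?yM ?xV ?yV //.
have /setDP [zV zM] : z \in V :\: cover M by rewrite Rxyz !inE eqxx !orbT.
have nonadj u : u \in V -> u \notin cover M -> ~~ del_edge e x y u z.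
  by move=> uV uM; apply/negP => /(coverM u z uV zV); rewrite (negbTE uM) (negbTE zM).
exists x, y, z; split; rewrite // 1?eq_sym //; split=> //.
  apply: contraNN (nonadj y yV yM) => eyz.
  by rewrite /del_edge eyz (negbTE zx) eq_sym (negbTE xy) !andbF.
apply: contraNN (nonadj x xV xM) => exz.
by rewrite /del_edge exz (negbTE zx) (negbTE zy) (negbTE xy) !andbF.
Qed.

End UncoveredCoP3.

Definition removable_coP3 (T : finType) (V : {set T}) (e : rel T) (R : {set T}) :=
  [/\ R \subset V, #|R| = 3, induces_coP3 e R & has_perfect_matching (V :\: R) e].

Section FactorCritical.
Variables (T : finType) (V : {set T}) (e : rel T).
Hypotheses (irr : irreflexive e) (sym : symmetric e) (fcV : factor_critical V e).

Lemma near_perfect_maximal a b : a \in V -> exists N, [/\ maximal_matching V e N,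
  maximal_matching V (del_edge e a b) N & #|N| * 2 = #|V| - 1].
Proof.
move=> aV; have [N [matchN coverN]] := fcV aV.
have free1 e' : irreflexive e' -> {in [set a] &, forall u v, ~~ e' u v}.
  by move=> irr' u v; rewrite !inE => /eqP -> /eqP ->; rewrite irr'.
exists N; split.
- exact: perfect_matching_setD_maximal (free1 _ irr) (conj matchN coverN).
- apply: perfect_matching_setD_maximal (free1 _ (irreflexive_del_edge a b irr)) _.
  by split=> //; apply: matching_del_edge; rewrite ?setD11.
- rewrite (card_perfect_matching irr (conj matchN coverN)).
  by move: (cardsD1 a V); rewrite aV; lia.
Qed.

Lemma edge_stable_no_removable_coP3 R : edge_stable V e -> ~ removable_coP3 V e R.
Proof.
move=> [_ stable] [RV R3 [a [b [c [defR _ _ _ [eab nbc nac]]]]] [M [matchM coverM]]].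
have [aV bV] : a \in V /\ b \in V.
  by split; apply: (subsetP RV); rewrite defR !inE eqxx ?orbT.
have [N [_ maxN cardN]] := near_perfect_maximal b aV.
have maxM : maximal_matching V (del_edge e a b) M.
  apply: perfect_matching_setD_maximal (coP3_del_edge_free irr sym nbc nac) _.
  by rewrite -defR; split=> //; apply: matching_del_edge; rewrite // defR !inE eqxx.
have := stable a b aV bV eab _ _ maxM maxN.
have := card_perfect_matching irr (conj matchM coverM).
rewrite cardsD (setIidPr RV) R3.
by have := subset_leq_card RV; rewrite R3; lia.
Qed.

Hypotheses (eqV : equimatchable V e) (noR : forall R, ~ removable_coP3 V e R).

Lemma del_edge_maximal_matching x y M : x \in V -> y \in V -> e x y ->
  maximal_matching V (del_edge e x y) M -> maximal_matching V e M.
Proof.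
move=> xV yV exy maxM; have /maximal_matchingP [matchM' coverM'] := maxM.
have matchM : matching V e M.
  by apply: matching_sub (subxx V) _ matchM' => u v _ _ /del_edge_sub.
apply/maximal_matchingP; split=> // u v uV vV euv.
apply/negPn/negP; rewrite negb_or => /andP [uM vM].
have [xM yM] : x \notin cover M /\ y \notin cover M.
  have : ~~ del_edge e x y u v.
    by apply/negP => /(coverM' u v uV vV); rewrite (negbTE uM) (negbTE vM).
  by case/(del_edge_deleted euv)/orP => /andP [/eqP <- /eqP <-].
have [N [maxN _ cardN]] := near_perfect_maximal x xV.
have := eqV (maximal_matching_setU1_del_edge maxM xV yV exy xM yM) maxN.
rewrite cardsU1 (edge_notin_matching _ xM) => cardM.
have coverMV := cover_matching_sub matchM.
have R3 : #|V :\: cover M| = 3.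
  rewrite cardsD (setIidPr coverMV) (card_cover_matching irr matchM).
  by have := subset_leq_card coverMV; rewrite (card_cover_matching irr matchM); lia.
apply: (noR (R := V :\: cover M)); split; first exact: subsetDl.
- exact: R3.
- exact: (uncovered_coP3 irr maxM xV yV exy xM yM R3).
- exists M; rewrite setDDr setDv set0U (setIidPr coverMV).
  by split; first exact: matching_cover matchM.
Qed.

End FactorCritical.

Theorem lemma3p2 (T : finType) (V : {set T}) (e : rel T) :
  simple_graph e ->
  factor_critical V e ->
  equimatchable V e ->
  (edge_stable V e <->
   ~ (exists R : {set T},
        [/\ R \subset V, #|R| = 3, induces_coP3 e R &
            has_perfect_matching (V :\: R) e])).
Proof.
move=> [irr sym] fcV eqV; split.
  by move=> stable [R]; apply: edge_stable_no_removable_coP3 stable.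
move=> noR; split=> // x y xV yV exy M1 M2 maxM1 maxM2.
have noR' R : ~ removable_coP3 V e R by move=> removableR; apply: noR; exists R.
have maxG := del_edge_maximal_matching irr fcV eqV noR' xV yV exy.
exact: eqV (maxG _ maxM1) (maxG _ maxM2).
Qed.
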